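(* Let $D,W,N_0,\zeta,P_A,h,g>0$ and $\gamma=\frac{g\zeta P_A h}{WN_0}$. Consider the problem: minimize $\tau_0+\tau_S$ over $\tau_0,\tau_S,P\ge 0$ subject to $P\tau_S\le \zeta P_A h\tau_0$ and $\tau_S W\log_2\left(1+\frac{Pg}{WN_0}\right)\ge D$. Its optimal solution has $$\dot\tau_S=\frac{D\ln 2}{W\alpha},\qquad \dot\tau_0=\frac{D\ln 2}{W\alpha\gamma}\left(2^{\alpha/\ln 2}-1\right),$$ where $\alpha=\mathbb{L}_0\!\left(\frac{\gamma-1}{e}\right)+1$ and $\mathbb{L}_0$ is the principal (branch $0$) Lambert W function.
   Context: Single source wireless powered network without a maximum transmit power constraint: the source harvests energy $\zeta P_A h\tau_0$ during time $\tau_0$ and then transmits $D$ bits with power $P$ during time $\tau_S$ over an AWGN channel with gain $g$, bandwidth $W$ and noise spectral density $N_0$. *)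

From Stdlib Require Import Reals ClassicalEpsilon.
Open Scope R_scope.

Definition log2 (x : R) : R := ln x / ln 2.

(* Principal branch (branch 0) of the Lambert W function: for y >= -1/e it is
   the unique w >= -1 with w * e^w = y (chosen by epsilon; unspecified
   outside the domain, which is never used below). *)
Definition LambertW0 (y : R) : R :=
  epsilon (inhabits 0) (fun w => -1 <= w /\ w * exp w = y).

Definition feasible (D W N0 zeta PA h g : R) (tau0 tauS P : R) : Prop :=
  0 <= tau0 /\ 0 <= tauS /\ 0 <= P /\
  P * tauS <= zeta * PA * h * tau0 /\
  tauS * W * log2 (1 + P * g / (W * N0)) >= D.

Definition optimal (D W N0 zeta PA h g : R) (tau0 tauS P : R) : Prop :=
  feasible D W N0 zeta PA h g tau0 tauS P /\
  forall t0 tS Q, feasible D W N0 zeta PA h g t0 tS Q -> tau0 + tauS <= t0 + tS.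

(* Write x = 1 + P g / (W N0) for the received SNR plus one and
   B = D ln 2 / W.  In these variables the constraints read
   (x - 1) tauS <= gamma tau0 and B <= tauS ln x, and the chain
     e^a B <= e^a tauS ln x <= tauS (x + gamma - 1) <= gamma (tau0 + tauS)
   bounds the objective from below.  The middle step is the tangent line of
   ln at e^a, where a is chosen so that e^a (a - 1) = gamma - 1; solving that
   equation for a is exactly what the Lambert W function does.  Equality
   throughout forces x = e^a, tauS = B / a and gamma tau0 = (e^a - 1) tauS. *)

From Stdlib Require Import Reals Lra Psatz ClassicalEpsilon.
Open Scope R_scope.

Lemma ln_lt_tangent_exp (u x : R) :
  0 < x -> x <> exp u -> exp u * ln x < x + exp u * (u - 1).
Proof.
  intros x_pos x_neq.
  pose proof (exp_pos u) as eu_pos.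
  assert (t_neq0 : ln x - u <> 0).
  { intro t_eq0; apply x_neq; rewrite <- (exp_ln x x_pos); f_equal; lra. }
  assert (exp_t : exp (ln x - u) = x / exp u).
  { unfold Rminus; rewrite exp_plus, exp_Ropp, exp_ln by exact x_pos; reflexivity. }
  pose proof (exp_ineq1 _ t_neq0) as ineq; rewrite exp_t in ineq.
  apply Rmult_lt_compat_l with (r := exp u) in ineq; [|exact eu_pos].
  replace (exp u * (x / exp u)) with x in ineq by (field; lra).
  lra.
Qed.

Lemma ln_le_tangent_exp (u x : R) :
  0 < x -> exp u * ln x <= x + exp u * (u - 1).
Proof.
  intro x_pos.
  destruct (Req_dec x (exp u)) as [->|x_neq].
  - rewrite ln_exp; lra.
  - left; apply ln_lt_tangent_exp; assumption.
Qed.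

Lemma exp_m1 : exp (-1) = / exp 1.
Proof. rewrite <- exp_Ropp; reflexivity. Qed.

Lemma Lambert_equation_solvable (y : R) :
  - / exp 1 < y -> exists w, -1 < w /\ w * exp w = y.
Proof.
  intro y_gt.
  set (f := fun w => w * exp w - y).
  assert (f_cont : continuity f).
  { apply continuity_minus; [|apply continuity_const; intros ? ?; reflexivity].
    apply continuity_mult; apply derivable_continuous;
      [apply derivable_id | apply derivable_exp]. }
  set (b := Rabs y + 1).
  assert (f_neg : f (-1) < 0) by (unfold f; rewrite exp_m1; lra).
  assert (f_pos : 0 < f b).
  { unfold f, b; pose proof (exp_ineq1_le (Rabs y + 1));
      pose proof (Rle_abs y); pose proof (Rabs_pos y); nra. }
  destruct (IVT f (-1) b f_cont ltac:(unfold b; pose proof (Rabs_pos y); lra)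
              f_neg f_pos) as [w [[w_ge _] fw0]].
  exists w; unfold f in fw0; split; [|lra].
  destruct w_ge as [|<-]; [assumption|].
  exfalso; rewrite exp_m1 in fw0; lra.
Qed.

Lemma LambertW0_spec (y : R) :
  - / exp 1 < y -> -1 < LambertW0 y /\ LambertW0 y * exp (LambertW0 y) = y.
Proof.
  intro y_gt.
  destruct (Lambert_equation_solvable y y_gt) as [w [w_gt w_eq]].
  destruct (epsilon_spec (inhabits 0) (fun w => -1 <= w /\ w * exp w = y)
              (ex_intro _ w (conj (Rlt_le _ _ w_gt) w_eq))) as [[W_gt|W_m1] W_eq].
  - split; assumption.
  - exfalso; unfold LambertW0 in W_eq; rewrite <- W_m1, exp_m1 in W_eq; lra.
Qed.

Lemma LambertW0_shift_spec (gam : R) (a := LambertW0 ((gam - 1) / exp 1) + 1) :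
  0 < gam -> 0 < a /\ exp a * (a - 1) = gam - 1.
Proof.
  intro gam_pos.
  pose proof (exp_pos 1) as e_pos.
  destruct (LambertW0_spec ((gam - 1) / exp 1)) as [w_gt w_eq].
  { unfold Rdiv; replace (- / exp 1) with (-1 * / exp 1) by ring.
    apply Rmult_lt_compat_r; [apply Rinv_0_lt_compat|]; lra. }
  unfold a; split; [lra|].
  replace (_ + 1 - 1) with (LambertW0 ((gam - 1) / exp 1)) by ring.
  rewrite exp_plus, Rmult_comm, <- Rmult_assoc, w_eq; field; lra.
Qed.

Section ReducedProblem.

Variables gam a B : R.
Hypotheses (gam_pos : 0 < gam) (a_pos : 0 < a)
  (a_eq : exp a * (a - 1) = gam - 1) (B_pos : 0 < B).

Definition reduced_feasible (t0 tS x : R) : Prop :=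
  0 <= t0 /\ 0 <= tS /\ 1 <= x /\ (x - 1) * tS <= gam * t0 /\ B <= tS * ln x.

Definition tauS_star : R := B / a.
Definition tau0_star : R := tauS_star * (exp a - 1) / gam.

Lemma reduced_feasible_star : reduced_feasible tau0_star tauS_star (exp a).
Proof.
  pose proof (exp_ineq1_le a) as ea_ge.
  assert (tS_pos : 0 < tauS_star) by (apply Rdiv_lt_0_compat; assumption).
  unfold reduced_feasible, tau0_star; rewrite ln_exp; repeat split.
  - apply Rmult_le_pos; [nra | left; apply Rinv_0_lt_compat; assumption].
  - lra.
  - lra.
  - right; field; lra.
  - right; unfold tauS_star; field; lra.
Qed.

Lemma reduced_value_star : gam * (tau0_star + tauS_star) = exp a * B.
Proof.
  transitivity (tauS_star * (exp a - 1 + gam)); [unfold tau0_star; field; lra|].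
  replace (exp a - 1 + gam) with (exp a * a) by lra.
  unfold tauS_star; field; lra.
Qed.

Lemma reduced_objective_chain (t0 tS x : R) : reduced_feasible t0 tS x ->
  exp a * B <= exp a * (tS * ln x) /\
  exp a * (tS * ln x) <= tS * (x + gam - 1) /\
  tS * (x + gam - 1) <= gam * (t0 + tS).
Proof.
  intros (t0_ge & tS_ge & x_ge & power_le & rate_ge).
  pose proof (exp_pos a) as ea_pos.
  pose proof (ln_le_tangent_exp a x ltac:(lra)) as tangent.
  repeat split; nra.
Qed.

Lemma reduced_min (t0 tS x : R) : reduced_feasible t0 tS x ->
  tau0_star + tauS_star <= t0 + tS.
Proof.
  intro F; destruct (reduced_objective_chain t0 tS x F) as (c1 & c2 & c3).
  apply (Rmult_le_reg_l gam); [assumption|].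
  rewrite reduced_value_star; lra.
Qed.

Lemma reduced_argmin (t0 tS x : R) : reduced_feasible t0 tS x ->
  t0 + tS <= tau0_star + tauS_star -> t0 = tau0_star /\ tS = tauS_star.
Proof.
  intros F le_star.
  destruct (reduced_objective_chain t0 tS x F) as (c1 & c2 & c3).
  destruct F as (_ & tS_ge & x_ge & _ & rate_ge).
  pose proof (exp_pos a) as ea_pos.
  assert (le_value : gam * (t0 + tS) <= exp a * B).
  { rewrite <- reduced_value_star; apply Rmult_le_compat_l; lra. }
  assert (tS_pos : 0 < tS).
  { destruct tS_ge as [|<-]; [assumption|]; lra. }
  assert (x_eq : x = exp a).
  { destruct (Req_dec x (exp a)) as [|x_neq]; [assumption|].
    pose proof (ln_lt_tangent_exp a x ltac:(lra) x_neq); nra. }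
  subst x; rewrite ln_exp in c1, c2.
  assert (tS_eq : tS = tauS_star).
  { unfold tauS_star; apply (Rmult_eq_reg_r a); [|lra].
    apply (Rmult_eq_reg_l (exp a)); [|lra].
    field_simplify; lra. }
  split; [|exact tS_eq].
  unfold tau0_star; rewrite <- tS_eq.
  apply (Rmult_eq_reg_l gam); [|lra]; field_simplify; nra.
Qed.

End ReducedProblem.

Lemma Rmult_le_iff_l (k u v : R) : 0 < k -> k * u <= k * v <-> u <= v.
Proof.
  intro k_pos; split; [apply Rmult_le_reg_l, k_pos | apply Rmult_le_compat_l; lra].
Qed.

Lemma feasible_iff_reduced (D W N0 zeta PA h g t0 tS P : R) :
  0 < W -> 0 < N0 -> 0 < g ->
  feasible D W N0 zeta PA h g t0 tS P <->
  reduced_feasible (g * zeta * PA * h / (W * N0)) (D * ln 2 / W)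
    t0 tS (1 + P * g / (W * N0)).
Proof.
  intros W_pos N0_pos g_pos.
  pose proof ln_lt_2 as ln2_gt.
  set (k := g / (W * N0)).
  assert (k_pos : 0 < k) by (apply Rdiv_lt_0_compat; nra).
  assert (P_iff : 0 <= P <-> 1 <= 1 + P * g / (W * N0)).
  { rewrite <- (Rmult_le_iff_l k) by exact k_pos.
    replace (P * g / (W * N0)) with (k * P) by (unfold k; field; lra).
    rewrite Rmult_0_r; lra. }
  assert (power_iff : P * tS <= zeta * PA * h * t0 <->
    (1 + P * g / (W * N0) - 1) * tS <= g * zeta * PA * h / (W * N0) * t0).
  { rewrite <- (Rmult_le_iff_l k) by exact k_pos.
    replace ((1 + P * g / (W * N0) - 1) * tS) with (k * (P * tS))
      by (unfold k; field; lra).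
    replace (g * zeta * PA * h / (W * N0) * t0) with (k * (zeta * PA * h * t0))
      by (unfold k; field; lra).
    reflexivity. }
  assert (rate_iff : tS * W * log2 (1 + P * g / (W * N0)) >= D <->
    D * ln 2 / W <= tS * ln (1 + P * g / (W * N0))).
  { rewrite <- (Rmult_le_iff_l (W / ln 2)) by (apply Rdiv_lt_0_compat; lra).
    replace (W / ln 2 * (D * ln 2 / W)) with D by (field; lra).
    replace (W / ln 2 * (tS * ln (1 + P * g / (W * N0)))) with
      (tS * W * log2 (1 + P * g / (W * N0))) by (unfold log2; field; lra).
    lra. }
  unfold feasible, reduced_feasible; tauto.
Qed.

Theorem lemma2 (D W N0 zeta PA h g : R) :
  0 < D -> 0 < W -> 0 < N0 -> 0 < zeta -> 0 < PA -> 0 < h -> 0 < g ->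
  let gamma := g * zeta * PA * h / (W * N0) in
  let alpha := LambertW0 ((gamma - 1) / exp 1) + 1 in
  let tauS_opt := D * ln 2 / (W * alpha) in
  let tau0_opt := D * ln 2 / (W * alpha * gamma) * (Rpower 2 (alpha / ln 2) - 1) in
  (exists P, optimal D W N0 zeta PA h g tau0_opt tauS_opt P) /\
  (forall tau0 tauS P, optimal D W N0 zeta PA h g tau0 tauS P ->
     tau0 = tau0_opt /\ tauS = tauS_opt).
Proof.
  intros D_pos W_pos N0_pos zeta_pos PA_pos h_pos g_pos gam a tauS_opt tau0_opt.
  assert (gam_pos : 0 < gam)
    by (unfold gam; apply Rdiv_lt_0_compat; repeat apply Rmult_lt_0_compat; lra).
  destruct (LambertW0_shift_spec gam gam_pos) as [a_pos a_eq]; fold a in a_pos, a_eq.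
  set (B := D * ln 2 / W).
  assert (B_pos : 0 < B).
  { pose proof ln_lt_2; apply Rdiv_lt_0_compat; [apply Rmult_lt_0_compat|]; lra. }
  assert (tauS_eq : tauS_opt = tauS_star a B) by (unfold tauS_opt, tauS_star, B; field; lra).
  assert (tau0_eq : tau0_opt = tau0_star gam a B).
  { assert (pow_eq : Rpower 2 (a / ln 2) = exp a).
    { pose proof ln_lt_2; unfold Rpower; f_equal; field; lra. }
    unfold tau0_opt, tau0_star, tauS_star, B; rewrite pow_eq; field; lra. }
  rewrite tauS_eq, tau0_eq.
  set (P_star := (exp a - 1) * (W * N0 / g)).
  assert (F_star : feasible D W N0 zeta PA h g (tau0_star gam a B) (tauS_star a B) P_star).
  { apply feasible_iff_reduced; [assumption..|].
    replace (1 + P_star * g / (W * N0)) with (exp a) by (unfold P_star; field; lra).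
    apply reduced_feasible_star; assumption. }
  split.
  - exists P_star; split; [exact F_star|].
    intros t0 tS Q F; apply feasible_iff_reduced in F; [|assumption..].
    exact (reduced_min gam a B gam_pos a_pos a_eq _ _ _ F).
  - intros t0 tS Q [F minimal].
    apply (reduced_argmin gam a B gam_pos a_pos a_eq B_pos t0 tS (1 + Q * g / (W * N0))).
    + apply feasible_iff_reduced; assumption.
    + exact (minimal _ _ _ F_star).
Qed.
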